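(* Let $\tau>\frac{3+\sqrt{17}}{2}$, $\gamma>0$, $\alpha\in D_{\gamma,\tau}$ with convergents $p_n/q_n$. Suppose that $\alpha-\frac{p_n}{q_n}>\frac{\gamma}{q_n^{\tau+1}}$ for every even $n$, and that for infinitely many even $m$ one has, for all even $n<m$, $$\frac{p_n}{q_n}+\frac{\gamma}{q_n^{\tau+1}}<\frac{p_m}{q_m}-\frac{\gamma}{q_m^{\tau+1}}-\frac{2\gamma}{q_m^{\tau-1}}.$$ Then $\alpha$ is an accumulation point of $D_{\gamma,\tau}$.
   Context: For $x\in\mathbb{R}$, $\|x\|:=\min_{p\in\mathbb{Z}}|x-p|$; $\mathbb{N}=\{1,2,\dots\}$. For $\gamma>0,\tau\ge1$, $D_{\gamma,\tau}:=\{\alpha\in(0,1): \|q\alpha\|\ge\gamma/q^\tau\ \forall q\in\mathbb{N}\}$; its elements are irrational. For irrational $\alpha\in(0,1)$ write $\alpha=\cfrac{1}{a_1+\cfrac{1}{a_2+\cdots}}$, and let $p_n/q_n$ ($n\ge0$) be its convergents: $p_{-1}=1,q_{-1}=0,p_0=0,q_0=1$, $p_n=a_np_{n-1}+p_{n-2}$, $q_n=a_nq_{n-1}+q_{n-2}$. Even-indexed convergents lie below $\alpha$. *)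

From Stdlib Require Import Reals Lra Lia ZArith Arith.
Open Scope R_scope.

Definition dist_Z (x : R) : R :=
  Rmin (x - IZR (Int_part x)) (IZR (Int_part x) + 1 - x).

Definition D (gamma tau : R) : R -> Prop := fun alpha =>
  0 < alpha < 1 /\
  forall q : nat, (1 <= q)%nat ->
    dist_Z (INR q * alpha) >= gamma / Rpower (INR q) tau.

Definition irrational (x : R) : Prop :=
  forall (p : Z) (q : nat), (1 <= q)%nat -> x <> IZR p / INR q.

Fixpoint cf_rest (a : R) (n : nat) : R :=
  match n with
  | O => a
  | S k => / cf_rest a k - IZR (Int_part (/ cf_rest a k))
  end.

(* partial quotient a_n (n >= 1): a_{n+1} = floor(1 / cf_rest a n) *)
Definition cf_a (a : R) (n : nat) : nat :=
  match n with
  | O => O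
  | S k => Z.to_nat (Int_part (/ cf_rest a k))
  end.

(* cf_pq a n = (p_{n-1}, q_{n-1}, p_n, q_n) *)
Fixpoint cf_pq (a : R) (n : nat) : nat * nat * nat * nat :=
  match n with
  | O => (1%nat, 0%nat, 0%nat, 1%nat)
  | S k =>
      let '(pm, qm, p, q) := cf_pq a k in
      (p, q, (cf_a a (S k) * p + pm)%nat, (cf_a a (S k) * q + qm)%nat)
  end.

Definition cf_p (a : R) (n : nat) : nat := let '(_, _, p, _) := cf_pq a n in p.
Definition cf_q (a : R) (n : nat) : nat := let '(_, _, _, q) := cf_pq a n in q.

Definition accumulation_point (S : R -> Prop) (x : R) : Prop :=
  forall eps : R, 0 < eps -> exists y, S y /\ y <> x /\ Rabs (y - x) < eps.

(* Take an even index m = 2j satisfying the separation hypothesis, with q_m large; write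
   rho(q) = gamma/q^(tau+1), A = q_m^(tau-1), and look at the window W = [b - 2 gamma/A, b]
   with b = p_m/q_m - rho(q_m).  It lies below alpha, within 3/q_m of it, and every point of
   W outside all the balls B(p/q, rho(q)) is in D_{gamma,tau}.
   Balls with q <= A/(2 q_m) miss W: placing p/q between consecutive even convergents,
   either the separation hypothesis applies to the convergent just above p/q, or p/q lies in
   the last gap below p_m/q_m, where its distance to p_m/q_m is at least
   max(1/(q q_m), 1/(2q^2)) and absorbs rho(q) + rho(q_m) + 2 gamma/A.
   For larger q at most q |W| + 3 balls of denominator q meet W, each of length
   2 rho(q) <= 2 gamma/q^4, and summing over q > A/(2 q_m) gives less than |W| because
   A^2 >= q_m^5 for tau >= 7/2.  So no finite family of balls covers W, and compactness of W
   yields a point avoiding all of them. *)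

From Stdlib Require Import Reals Lra Lia ZArith List Classical ClassicalEpsilon.
Open Scope R_scope.

Lemma Rdiv_le_cross a b c d : 0 < b -> 0 < d -> a * d <= c * b -> a / b <= c / d.
Proof.
  intros Hb Hd H. apply Rmult_le_reg_r with (b * d); [nra|].
  replace (a / b * (b * d)) with (a * d) by (field; lra).
  replace (c / d * (b * d)) with (c * b) by (field; lra). exact H.
Qed.

Lemma inv_sq_le_telescope x : 1 <= x -> 1 / x ^ 2 <= 2 / x - 2 / (x + 1).
Proof.
  intros Hx. replace (2 / x - 2 / (x + 1)) with (2 / (x * (x + 1))) by (field; lra).
  apply Rdiv_le_cross; nra.
Qed.

Lemma Rdiv_lt_swap a x e : 0 < e -> 0 < x -> a / e < x -> a / x < e.
Proof.
  intros He Hx H.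
  apply Rmult_lt_compat_r with (r := e) in H; [|lra].
  replace (a / e * e) with a in H by (field; lra).
  apply Rmult_lt_reg_r with x; [lra|].
  replace (a / x * x) with a by (field; lra). lra.
Qed.

Lemma sqrt_17_gt_4 : 4 < sqrt 17.
Proof.
  replace 4 with (sqrt (4 * 4)) by (apply sqrt_square; lra).
  apply sqrt_lt_1_alt. lra.
Qed.

Lemma Rpower_pos x e : 0 < Rpower x e.
Proof. apply exp_pos. Qed.

Lemma Rpower_1_base e : Rpower 1 e = 1.
Proof. unfold Rpower. rewrite ln_1, Rmult_0_r. apply exp_0. Qed.

Lemma pow_le_Rpower x n e : 1 <= x -> INR n <= e -> x ^ n <= Rpower x e.
Proof. intros Hx He. rewrite <- Rpower_pow by lra. apply Rle_Rpower; lra. Qed.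

Lemma Rpower_plus_1 x e : 0 < x -> Rpower x (e + 1) = x * Rpower x e.
Proof. intros Hx. rewrite Rpower_plus, Rpower_1 by exact Hx. ring. Qed.

Lemma Rpower_plus_2 x e : 0 < x -> Rpower x (e + 1) = x ^ 2 * Rpower x (e - 1).
Proof.
  intros Hx. replace (e + 1) with ((e - 1) + INR 2) by (simpl; ring).
  rewrite Rpower_plus, Rpower_pow by exact Hx. ring.
Qed.

Lemma frac_lt_gap (a c : Z) (b d : nat) : (1 <= b)%nat -> (1 <= d)%nat ->
  IZR a / INR b < IZR c / INR d -> 1 / (INR b * INR d) <= IZR c / INR d - IZR a / INR b.
Proof.
  intros Hb Hd Hlt. apply (le_INR 1) in Hb, Hd. simpl in Hb, Hd.
  rewrite !INR_IZR_INZ in *.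
  replace (IZR c / IZR (Z.of_nat d) - IZR a / IZR (Z.of_nat b))
    with ((IZR (c * Z.of_nat b) - IZR (a * Z.of_nat d)) / (IZR (Z.of_nat b) * IZR (Z.of_nat d)))
    by (rewrite !mult_IZR; field; lra).
  assert (Hcross : (a * Z.of_nat d < c * Z.of_nat b)%Z).
  { apply lt_IZR. rewrite !mult_IZR.
    apply Rmult_lt_compat_r with (r := IZR (Z.of_nat b) * IZR (Z.of_nat d)) in Hlt; [|nra].
    replace (IZR a / IZR (Z.of_nat b) * (IZR (Z.of_nat b) * IZR (Z.of_nat d)))
      with (IZR a * IZR (Z.of_nat d)) in Hlt by (field; lra).
    replace (IZR c / IZR (Z.of_nat d) * (IZR (Z.of_nat b) * IZR (Z.of_nat d)))
      with (IZR c * IZR (Z.of_nat b)) in Hlt by (field; lra).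
    exact Hlt. }
  apply Rmult_le_compat_r; [apply Rlt_le, Rinv_0_lt_compat; nra|].
  rewrite <- minus_IZR. apply IZR_le. lia.
Qed.

Lemma sum_le_of_inv_gaps a b q : 0 < a -> 0 < b -> 0 < q ->
  1 / (q * a) + 1 / (q * b) <= 1 / (a * b) -> a + b <= q.
Proof.
  intros Ha Hb Hq H.
  apply Rmult_le_compat_r with (r := q * a * b) in H; [|apply Rlt_le; repeat apply Rmult_lt_0_compat; lra].
  replace ((1 / (q * a) + 1 / (q * b)) * (q * a * b)) with (b + a) in H by (field; lra).
  replace (1 / (a * b) * (q * a * b)) with q in H by (field; lra).
  lra.
Qed.

Lemma le_of_inv_mul_le a b c : 0 < a -> 0 < b -> 0 < c -> 1 / (a * c) <= 1 / (b * c) -> b <= a.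
Proof.
  intros Ha Hb Hc H.
  apply Rmult_le_compat_r with (r := a * b * c) in H; [|apply Rlt_le; repeat apply Rmult_lt_0_compat; lra].
  replace (1 / (a * c) * (a * b * c)) with b in H by (field; lra).
  replace (1 / (b * c) * (a * b * c)) with a in H by (field; lra).
  exact H.
Qed.

(** * Lengths of interval families and compactness *)

Definition total_length (l : list (R * R)) : R :=
  fold_right (fun I s => snd I - fst I + s) 0 l.

Definition ball (c r : R) : R * R := (c - r, c + r).

Lemma total_length_app l1 l2 :
  total_length (l1 ++ l2) = total_length l1 + total_length l2.
Proof. induction l1 as [|I l1 IH]; simpl; [lra | rewrite IH; lra]. Qed.

Lemma total_length_flat_map {T : Type} (f : T -> list (R * R)) l :
  total_length (flat_map f l) = fold_right (fun q s => total_length (f q) + s) 0 l.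
Proof. induction l as [|x l IH]; simpl; [reflexivity | rewrite total_length_app, IH; reflexivity]. Qed.

Lemma total_length_ge0 l :
  (forall I, In I l -> fst I <= snd I) -> 0 <= total_length l.
Proof.
  induction l as [|I l IH]; simpl; intros Hord; [lra|].
  assert (fst I <= snd I) by (apply Hord; auto).
  assert (0 <= total_length l) by (apply IH; auto).
  lra.
Qed.

Lemma total_length_map_ball {T : Type} (c : T -> R) r l :
  total_length (map (fun x => ball (c x) r) l) = INR (length l) * (2 * r).
Proof.
  induction l as [|x l IH]; [simpl; ring|].
  cbn [map length fold_right total_length] in *. rewrite S_INR.
  unfold total_length in IH. rewrite IH. unfold ball; simpl. ring.
Qed.

Lemma interval_cover_length l a b :
  a <= b -> (forall I, In I l -> fst I <= snd I) ->
  (forall x, a <= x <= b -> exists I, In I l /\ fst I < x < snd I) ->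
  b - a < total_length l.
Proof.
  remember (length l) as n eqn:Hn. revert l a Hn.
  induction n as [|n IH]; intros l a Hn Hab Hord Hcov.
  - destruct l; [|discriminate]. destruct (Hcov a) as [I [[] _]]; lra.
  - destruct (Hcov a) as [I [HI Ha]]; [lra|].
    destruct (in_split _ _ HI) as [l1 [l2 ->]].
    set (rest := l1 ++ l2).
    assert (Hsplit : total_length (l1 ++ I :: l2) = total_length rest + (snd I - fst I)).
    { unfold rest. rewrite !total_length_app. simpl. lra. }
    assert (Hrest : forall J, In J rest -> In J (l1 ++ I :: l2)).
    { intros J HJ. apply in_or_app. apply in_app_or in HJ. simpl. tauto. }
    rewrite Hsplit.
    destruct (Rlt_le_dec b (snd I)) as [Hb|Hb].
    + pose proof (total_length_ge0 rest (fun J HJ => Hord J (Hrest J HJ))). lra.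
    + enough (b - snd I < total_length rest) by lra.
      apply IH; [unfold rest; rewrite length_app in *; simpl in Hn; lia | lra | auto |].
      intros x Hx. destruct (Hcov x) as [J [HJ HxJ]]; [lra|].
      exists J; split; [|exact HxJ].
      apply in_app_or in HJ. apply in_or_app.
      destruct HJ as [HJ|[<-|HJ]]; [auto | lra | simpl; auto].
Qed.

Lemma closed_interval_avoids_open_family (a b : R) (bad : nat -> R -> Prop) :
  (forall q x, bad q x -> exists d, 0 < d /\ forall z, Rabs (z - x) < d -> bad q z) ->
  (forall K, exists x, a <= x <= b /\ forall q, (q <= K)%nat -> ~ bad q x) ->
  exists y, a <= y <= b /\ forall q, ~ bad q y.
Proof.
  intros Hopen Hfin.
  destruct (choice _ Hfin) as [u Hu].
  destruct (Bolzano_Weierstrass u _ (compact_P3 a b) (fun K => proj1 (Hu K))) as [y Hy].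
  assert (Hnear : forall (V : R -> Prop) N,
            (exists d, 0 < d /\ forall z, Rabs (z - y) < d -> V z) ->
            exists p, (N <= p)%nat /\ V (u p)).
  { intros V N [d [Hd HV]]. apply Hy. exists (mkposreal d Hd). intros z Hz. apply HV, Hz. }
  exists y. split; [split|].
  - apply Rnot_lt_le. intros Hya.
    destruct (Hnear (fun z => z < a) O) as [p [_ Hp]].
    { exists (a - y). split; [lra|]. intros z Hz. apply Rabs_def2 in Hz. lra. }
    pose proof (proj1 (Hu p)). lra.
  - apply Rnot_lt_le. intros Hby.
    destruct (Hnear (fun z => b < z) O) as [p [_ Hp]].
    { exists (y - b). split; [lra|]. intros z Hz. apply Rabs_def2 in Hz. lra. }
    pose proof (proj1 (Hu p)). lra.
  - intros q Hbad. destruct (Hnear (bad q) q (Hopen q y Hbad)) as [p [Hqp Hp]].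
    exact (proj2 (Hu p) q Hqp Hp).
Qed.

Lemma fold_sum_snoc (g : nat -> R) l n :
  fold_right (fun q s => g q + s) 0 (l ++ n :: nil) = fold_right (fun q s => g q + s) 0 l + g n.
Proof. induction l as [|m l IH]; simpl; [ring | rewrite IH; ring]. Qed.

Section InvSqTail.
Variables (Q B : R) (g : nat -> R).
Hypothesis Q_pos : 0 < Q.
Hypothesis B_ge0 : 0 <= B.
Hypothesis g_small : forall q, (1 <= q)%nat -> INR q <= Q -> g q <= 0.
Hypothesis g_large : forall q, Q < INR q -> g q <= B / INR q ^ 2.

Lemma sum_inv_sq_partial K :
  fold_right (fun q s => g q + s) 0 (seq 1 K) <= B * (2 / Q - 2 / Rmax (INR K + 1) Q).
Proof.
  induction K as [|K IH].
  - simpl fold_right. apply Rmult_le_pos; [lra|].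
    pose proof (Rmax_r (INR 0 + 1) Q).
    assert (2 / Rmax (INR 0 + 1) Q <= 2 / Q) by (apply Rdiv_le_cross; nra).
    lra.
  - rewrite seq_S, fold_sum_snoc. replace (1 + K)%nat with (S K) by lia.
    rewrite S_INR. pose proof (pos_INR K).
    destruct (Rle_dec (INR K + 1) Q) as [HKQ|HKQ].
    + pose proof (g_small (S K) ltac:(lia) ltac:(rewrite S_INR; lra)).
      assert (2 / Rmax (INR K + 1 + 1) Q <= 2 / Rmax (INR K + 1) Q).
      { pose proof (Rmax_r (INR K + 1) Q).
        pose proof (Rle_max_compat_r (INR K + 1) (INR K + 1 + 1) Q ltac:(lra)).
        apply Rdiv_le_cross; nra. }
      assert (0 <= B * (2 / Rmax (INR K + 1) Q - 2 / Rmax (INR K + 1 + 1) Q))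
        by (apply Rmult_le_pos; lra).
      lra.
    + pose proof (g_large (S K) ltac:(rewrite S_INR; lra)) as Hg. rewrite S_INR in Hg.
      rewrite Rmax_left in IH by lra. rewrite Rmax_left by lra.
      assert (B * (1 / (INR K + 1) ^ 2) <= B * (2 / (INR K + 1) - 2 / (INR K + 1 + 1)))
        by (apply Rmult_le_compat_l, inv_sq_le_telescope; lra).
      replace (B / (INR K + 1) ^ 2) with (B * (1 / (INR K + 1) ^ 2)) in Hg by (field; lra).
      lra.
Qed.

Lemma sum_inv_sq_tail K : fold_right (fun q s => g q + s) 0 (seq 1 K) <= 2 * B / Q.
Proof.
  eapply Rle_trans; [apply sum_inv_sq_partial|].
  assert (0 < Rmax (INR K + 1) Q) by (apply Rlt_le_trans with Q; [lra | apply Rmax_r]).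
  assert (0 <= 2 / Rmax (INR K + 1) Q) by (apply Rlt_le, Rdiv_lt_0_compat; lra).
  assert (B * (2 / Q - 2 / Rmax (INR K + 1) Q) <= B * (2 / Q)) by (apply Rmult_le_compat_l; lra).
  unfold Rdiv in *. lra.
Qed.

End InvSqTail.

(** * Numerical estimates for the window *)

(* [s < t] are consecutive convergents with [t - s = 1/(Q1 Q2)], and [x] is a fraction of
   denominator [q > Q1] lying below [s]. *)
Lemma gap_below_convergent q Q1 Q2 s t x :
  1 <= Q1 -> 1 <= Q2 -> Q1 + 1 <= q ->
  1 / (q * Q2) <= s - x -> 1 / (q * Q1) <= t - x -> t - s = 1 / (Q1 * Q2) ->
  1 / (2 * q ^ 2) < s - x.
Proof.
  intros HQ1 HQ2 Hq Hs Ht Hts.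
  destruct (Rle_lt_dec (2 * q) Q2) as [HqQ|HqQ].
  - assert (1 / (Q1 * Q2) <= 1 / (2 * q * Q1)) by (apply Rdiv_le_cross; nra).
    assert (1 / (2 * q * Q1) = 1 / (q * Q1) - 1 / (2 * q * Q1)) by (field; nra).
    assert (1 / (2 * q ^ 2) < 1 / (2 * q * Q1)).
    { unfold Rdiv. rewrite !Rmult_1_l. apply Rinv_lt_contravar; [|nra].
      apply Rmult_lt_0_compat; nra. }
    lra.
  - assert (1 / (2 * q ^ 2) < 1 / (q * Q2)).
    { unfold Rdiv. rewrite !Rmult_1_l. apply Rinv_lt_contravar; [|nra].
      apply Rmult_lt_0_compat; nra. }
    lra.
Qed.

(* [d] is the distance from a fraction [p/q] with [q <= A/(2 qm)] up to the convergent
   [p_m/q_m]. *)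
Lemma window_gap_absorbs q qm A g rq rm d :
  2 <= q -> 0 < g <= 1 / 2 -> 4 <= qm -> qm ^ 2 <= A -> 2 * q * qm <= A ->
  rq <= g / q ^ 4 -> rm = g / (qm ^ 2 * A) ->
  1 / (2 * q ^ 2) < d -> 1 / (q * qm) <= d ->
  rq + rm + 2 * g / A <= d.
Proof.
  intros Hq [Hg0 Hg1] Hqm HA HqA Hrq Hrm Hd2 Hd1. subst rm.
  assert (HA0 : 0 < A) by nra.
  destruct (Rle_lt_dec (2 * q) qm) as [Hsmall|Hlarge].
  - assert (Hq2 : 4 <= q ^ 2) by nra.
    assert (Hqm2 : 4 * q ^ 2 <= qm ^ 2) by nra.
    assert (g / q ^ 4 <= 1 / (8 * q ^ 2)).
    { apply Rdiv_le_cross; [nra | nra |]. replace (q ^ 4) with (q ^ 2 * q ^ 2) by ring. nra. }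
    assert (g / (qm ^ 2 * A) <= 1 / (8 * q ^ 2)) by (apply Rdiv_le_cross; nra).
    assert (2 * g / A <= 1 / (4 * q ^ 2)) by (apply Rdiv_le_cross; nra).
    assert (1 / (8 * q ^ 2) + 1 / (8 * q ^ 2) + 1 / (4 * q ^ 2) = 1 / (2 * q ^ 2)) by (field; nra).
    lra.
  - assert (Hq3 : 2 * qm <= q ^ 3) by nra.
    assert (g / q ^ 4 <= 1 / (4 * (q * qm))).
    { apply Rdiv_le_cross; [nra | nra |]. replace (q ^ 4) with (q * q ^ 3) by ring.
      assert (q * (2 * qm) <= q * q ^ 3) by (apply Rmult_le_compat_l; lra).
      assert (0 < q * qm) by nra.
      assert (g * (4 * (q * qm)) <= 2 * (q * qm)) by nra.
      lra. }
    assert (g / (qm ^ 2 * A) <= 1 / (2 * A)).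
    { apply Rdiv_le_cross; [apply Rmult_lt_0_compat; nra | lra |].
      assert (g * (2 * A) <= A) by nra.
      assert (1 <= qm ^ 2) by nra.
      assert (A <= qm ^ 2 * A) by nra.
      lra. }
    assert (2 * g / A <= 1 / A) by (apply Rdiv_le_cross; nra).
    assert (1 / (2 * A) + 1 / A = 3 / (2 * A)) by (field; lra).
    assert (3 / (2 * A) <= 3 / (4 * (q * qm))) by (apply Rdiv_le_cross; nra).
    assert (1 / (4 * (q * qm)) + 3 / (4 * (q * qm)) = 1 / (q * qm)) by (field; nra).
    lra.
Qed.

Lemma balls_length_bound q Q l g r n :
  0 < Q < q -> 0 < g -> 0 <= l -> 0 <= r <= g / q ^ 4 -> 0 <= n <= q * l + 3 ->
  n * (2 * r) <= 2 * g * (l / Q + 3 / Q ^ 2) / q ^ 2.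
Proof.
  intros HQ Hg Hl Hr Hn.
  assert (Hq2 : 0 < q ^ 2) by (apply pow_lt; lra).
  assert (n * (2 * r) <= (q * l + 3) * (2 * (g / q ^ 4))) by (apply Rmult_le_compat; lra).
  assert ((q * l + 3) * (2 * (g / q ^ 4)) = 2 * g * (l / q ^ 3 + 3 / q ^ 4)) by (field; lra).
  assert (l / q ^ 3 <= l / (Q * q ^ 2)).
  { apply Rdiv_le_cross; [apply pow_lt; lra | apply Rmult_lt_0_compat; lra |].
    apply Rmult_le_compat_l; [lra|].
    replace (q ^ 3) with (q * q ^ 2) by ring. apply Rmult_le_compat_r; lra. }
  assert (3 / q ^ 4 <= 3 / (Q ^ 2 * q ^ 2)).
  { apply Rdiv_le_cross; [apply pow_lt; lra | apply Rmult_lt_0_compat; [apply pow_lt|]; lra |].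
    replace (q ^ 4) with (q ^ 2 * q ^ 2) by ring.
    assert (Q ^ 2 <= q ^ 2) by (apply pow_incr; lra).
    apply Rmult_le_compat_l; [lra|]. apply Rmult_le_compat_r; lra. }
  replace (2 * g * (l / Q + 3 / Q ^ 2) / q ^ 2)
    with (2 * g * (l / (Q * q ^ 2) + 3 / (Q ^ 2 * q ^ 2))) by (field; lra).
  assert (2 * g * (l / q ^ 3 + 3 / q ^ 4) <= 2 * g * (l / (Q * q ^ 2) + 3 / (Q ^ 2 * q ^ 2)))
    by (apply Rmult_le_compat_l; lra).
  lra.
Qed.

(* The left side is [2 B / Q] of [sum_inv_sq_tail] for the window length [2 g / A] and
   [Q = A / (2 qm)]. *)
Lemma tail_bound_lt_window qm A g :
  10 <= qm -> qm ^ 2 <= A -> qm ^ 5 <= A ^ 2 -> 0 < g <= 1 / 2 ->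
  2 * (2 * g * (2 * g / A / (A / (2 * qm)) + 3 / (A / (2 * qm)) ^ 2)) / (A / (2 * qm))
  < 2 * g / A.
Proof.
  intros Hqm HA HA2 Hg.
  assert (HA0 : 0 < A) by nra.
  assert (EA : A = 2 * qm * (A / (2 * qm))) by (field; lra).
  generalize dependent (A / (2 * qm)). intros Q EA.
  assert (HQ : 0 < Q) by nra.
  assert (HQ2 : qm ^ 3 <= 4 * Q ^ 2).
  { apply Rmult_le_reg_l with (qm ^ 2); [nra|].
    replace (qm ^ 2 * qm ^ 3) with (qm ^ 5) by ring.
    replace (qm ^ 2 * (4 * Q ^ 2)) with (A ^ 2) by (rewrite EA; ring). exact HA2. }
  apply Rmult_lt_reg_r with (A * Q ^ 3); [apply Rmult_lt_0_compat; [lra | apply pow_lt; lra]|].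
  replace (2 * (2 * g * (2 * g / A / Q + 3 / Q ^ 2)) / Q * (A * Q ^ 3))
    with (8 * g * g * Q + 12 * g * A) by (field; lra).
  replace (2 * g / A * (A * Q ^ 3)) with (2 * g * Q ^ 3) by (field; lra).
  rewrite EA.
  assert (8 * g * g * Q <= 4 * g * Q).
  { assert (0 <= 4 * g * Q * (1 - 2 * g)) by (apply Rmult_le_pos; [nra | lra]). nra. }
  assert (100 * qm <= qm ^ 3) by nra.
  assert (4 * Q + 24 * qm * Q < Q ^ 3) by nra.
  nra.
Qed.

(** * The Diophantine condition *)

Lemma dist_Z_le x (p : Z) : dist_Z x <= Rabs (x - IZR p).
Proof.
  unfold dist_Z. destruct (base_Int_part x) as [Hfl Hfl'].
  destruct (Z_le_gt_dec p (Int_part x)) as [Hp|Hp].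
  - apply IZR_le in Hp. eapply Rle_trans; [apply Rmin_l|]. rewrite Rabs_right; lra.
  - assert (Hp' : (Int_part x + 1 <= p)%Z) by lia.
    apply IZR_le in Hp'. rewrite plus_IZR in Hp'.
    eapply Rle_trans; [apply Rmin_r|]. rewrite Rabs_left1; lra.
Qed.

Definition approx_radius (tau gamma : R) (q : nat) : R := gamma / Rpower (INR q) (tau + 1).

Lemma dist_mul_denominator y (p : Z) (q : nat) : (1 <= q)%nat ->
  Rabs (INR q * y - IZR p) = INR q * Rabs (y - IZR p / INR q).
Proof.
  intros Hq. apply (le_INR 1) in Hq. simpl in Hq.
  replace (INR q * y - IZR p) with (INR q * (y - IZR p / INR q)) by (field; lra).
  rewrite Rabs_mult, Rabs_right; lra.
Qed.

Lemma mul_approx_radius tau gamma (q : nat) : (1 <= q)%nat ->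
  INR q * approx_radius tau gamma q = gamma / Rpower (INR q) tau.
Proof.
  intros Hq. apply (le_INR 1) in Hq. simpl in Hq. unfold approx_radius.
  rewrite Rpower_plus_1 by lra. pose proof (Rpower_pos (INR q) tau). field. lra.
Qed.

Lemma D_approx_radius_le tau gamma y : D gamma tau y ->
  forall (p : Z) (q : nat), (1 <= q)%nat ->
  approx_radius tau gamma q <= Rabs (y - IZR p / INR q).
Proof.
  intros [_ HD] p q Hq. specialize (HD q Hq).
  pose proof (dist_Z_le (INR q * y) p) as Hdist.
  rewrite dist_mul_denominator, <- mul_approx_radius in * by exact Hq.
  apply (le_INR 1) in Hq. simpl in Hq.
  apply Rmult_le_reg_l with (INR q); lra.
Qed.

Lemma D_of_approx_radius_le tau gamma y : 0 < y < 1 ->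
  (forall (p : Z) (q : nat), (1 <= q)%nat -> approx_radius tau gamma q <= Rabs (y - IZR p / INR q)) ->
  D gamma tau y.
Proof.
  intros Hy Hfar. split; [exact Hy|]. intros q Hq.
  assert (Hfar' : forall p : Z, gamma / Rpower (INR q) tau <= Rabs (INR q * y - IZR p)).
  { intros p. rewrite dist_mul_denominator, <- mul_approx_radius by exact Hq.
    apply Rmult_le_compat_l; [apply pos_INR | apply Hfar, Hq]. }
  unfold dist_Z. destruct (base_Int_part (INR q * y)) as [Hfl Hfl'].
  apply Rle_ge, Rmin_glb.
  - pose proof (Hfar' (Int_part (INR q * y))) as H. rewrite Rabs_right in H; lra.
  - pose proof (Hfar' (Int_part (INR q * y) + 1)%Z) as H.
    rewrite plus_IZR, Rabs_left1 in H; lra.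
Qed.

Lemma D_gamma_le_half tau gamma y : D gamma tau y -> gamma <= 1 / 2.
Proof.
  intros HD. pose proof (proj1 HD) as Hy.
  pose proof (D_approx_radius_le tau gamma y HD 0 1 (le_n 1)) as H0.
  pose proof (D_approx_radius_le tau gamma y HD 1 1 (le_n 1)) as H1.
  unfold approx_radius in H0, H1. simpl in H0, H1. rewrite Rpower_1_base in H0, H1.
  replace (0 / 1) with 0 in H0 by field. replace (1 / 1) with 1 in H1 by field.
  rewrite Rabs_right in H0 by lra. rewrite Rabs_left1 in H1 by lra. lra.
Qed.

Lemma D_irrational tau gamma y : 0 < gamma -> D gamma tau y ->
  forall p q : nat, (1 <= q)%nat -> y <> INR p / INR q.
Proof.
  intros Hg HD p q Hq Hyq.
  pose proof (D_approx_radius_le tau gamma y HD (Z.of_nat p) q Hq) as H.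
  rewrite <- INR_IZR_INZ, <- Hyq, Rminus_diag, Rabs_R0 in H.
  assert (0 < approx_radius tau gamma q) by (apply Rdiv_lt_0_compat; [lra | apply Rpower_pos]).
  lra.
Qed.

Section ApproxRadius.
Variables tau gamma : R.
Hypothesis tau_ge3 : 3 <= tau.
Hypothesis gamma_pos : 0 < gamma.

Local Notation rho := (approx_radius tau gamma).

Lemma approx_radius_pos q : 0 < rho q.
Proof. apply Rdiv_lt_0_compat; [lra | apply Rpower_pos]. Qed.

Lemma approx_radius_1 : rho 1 = gamma.
Proof. unfold approx_radius. simpl. rewrite Rpower_1_base. field. Qed.

Lemma approx_radius_le_pow4 q : (1 <= q)%nat -> rho q <= gamma / INR q ^ 4.
Proof.
  intros Hq. apply (le_INR 1) in Hq. simpl in Hq.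
  assert (INR q ^ 4 <= Rpower (INR q) (tau + 1)) by (apply pow_le_Rpower; simpl; lra).
  apply Rdiv_le_cross; [apply Rpower_pos | apply pow_lt; lra | nra].
Qed.

Lemma approx_radius_antitone q1 q2 : (1 <= q1 <= q2)%nat -> rho q2 <= rho q1.
Proof.
  intros Hq. assert (1 <= INR q1) by (apply (le_INR 1); lia).
  assert (INR q1 <= INR q2) by (apply le_INR; lia).
  assert (Rpower (INR q1) (tau + 1) <= Rpower (INR q2) (tau + 1)) by (apply Rle_Rpower_l; lra).
  apply Rdiv_le_cross; [apply Rpower_pos | apply Rpower_pos | nra].
Qed.

Hypothesis gamma_le_half : gamma <= 1 / 2.

Lemma approx_radius_le_half_inv_sq q : (1 <= q)%nat -> rho q <= 1 / (2 * INR q ^ 2).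
Proof.
  intros Hq. eapply Rle_trans; [apply approx_radius_le_pow4, Hq|].
  apply (le_INR 1) in Hq. simpl in Hq.
  assert (1 <= INR q ^ 2) by nra.
  apply Rdiv_le_cross; [apply pow_lt; lra | nra |].
  replace (INR q ^ 4) with (INR q ^ 2 * INR q ^ 2) by ring. nra.
Qed.

Lemma mul_approx_radius_le_half q : (1 <= q)%nat -> INR q * rho q <= 1 / 2.
Proof.
  intros Hq. rewrite mul_approx_radius by exact Hq.
  apply (le_INR 1) in Hq. simpl in Hq.
  assert (1 <= Rpower (INR q) tau) by (rewrite <- (Rpower_O (INR q)) by lra; apply Rle_Rpower; lra).
  apply Rdiv_le_cross; [apply Rpower_pos | lra | nra].
Qed.

End ApproxRadius.

(** * Continued fractions *)

Definition cf_p_prev (a : R) (n : nat) : nat := let '(x, _, _, _) := cf_pq a n in x.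
Definition cf_q_prev (a : R) (n : nat) : nat := let '(_, x, _, _) := cf_pq a n in x.

Lemma cf_p_S a n : cf_p a (S n) = (cf_a a (S n) * cf_p a n + cf_p_prev a n)%nat.
Proof. unfold cf_p, cf_p_prev. simpl. destruct (cf_pq a n) as [[[? ?] ?] ?]. reflexivity. Qed.

Lemma cf_q_S a n : cf_q a (S n) = (cf_a a (S n) * cf_q a n + cf_q_prev a n)%nat.
Proof. unfold cf_q, cf_q_prev. simpl. destruct (cf_pq a n) as [[[? ?] ?] ?]. reflexivity. Qed.

Lemma cf_p_prev_S a n : cf_p_prev a (S n) = cf_p a n.
Proof. unfold cf_p, cf_p_prev. simpl. destruct (cf_pq a n) as [[[? ?] ?] ?]. reflexivity. Qed.

Lemma cf_q_prev_S a n : cf_q_prev a (S n) = cf_q a n.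
Proof. unfold cf_q, cf_q_prev. simpl. destruct (cf_pq a n) as [[[? ?] ?] ?]. reflexivity. Qed.

Lemma cf_det a n :
  INR (cf_p_prev a n) * INR (cf_q a n) - INR (cf_p a n) * INR (cf_q_prev a n) = (-1) ^ n.
Proof.
  induction n as [|n IH]; [simpl; lra|].
  change ((-1) ^ S n) with (-1 * (-1) ^ n). rewrite <- IH.
  rewrite cf_p_S, cf_q_S, cf_p_prev_S, cf_q_prev_S, !plus_INR, !mult_INR. ring.
Qed.

Lemma cf_rest_S a n : 0 < cf_rest a n < 1 ->
  cf_rest a (S n) = / cf_rest a n - INR (cf_a a (S n)) /\
  1 <= INR (cf_a a (S n)) /\ 0 <= cf_rest a (S n) < 1.
Proof.
  intros Hr. simpl. set (r := cf_rest a n) in *.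
  assert (Hinv : 1 < / r) by (rewrite <- Rinv_1; apply Rinv_lt_contravar; lra).
  destruct (base_Int_part (/ r)) as [Hfl Hfl'].
  assert (Hpos : (0 < Int_part (/ r))%Z) by (apply lt_IZR; lra).
  rewrite INR_IZR_INZ, Z2Nat.id by lia.
  assert (1 <= IZR (Int_part (/ r))) by (apply IZR_le; lia).
  repeat split; lra.
Qed.

Lemma mobius_step (x p p' q q' a r' : R) :
  0 < q -> 0 <= q' -> 1 <= a -> 0 <= r' ->
  x = (p + p' * / (a + r')) / (q + q' * / (a + r')) ->
  x = ((a * p + p') + p * r') / ((a * q + q') + q * r').
Proof.
  intros Hq Hq' Ha Hr' Hx. rewrite Hx. field. split; nra.
Qed.

Section Convergents.
Variable alpha : R.
Hypothesis alpha_01 : 0 < alpha < 1.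
Hypothesis alpha_irrational : forall p q : nat, (1 <= q)%nat -> alpha <> INR p / INR q.

Local Notation P n := (INR (cf_p alpha n)).
Local Notation Q n := (INR (cf_q alpha n)).
Local Notation r n := (cf_rest alpha n).

Lemma cf_expansion n :
  0 < r n < 1 /\ (1 <= cf_q alpha n)%nat /\
  alpha = (P n + INR (cf_p_prev alpha n) * r n) / (Q n + INR (cf_q_prev alpha n) * r n).
Proof.
  induction n as [|n [Hr [Hq Hx]]].
  - split; [exact alpha_01|]. split; [reflexivity|]. simpl. field.
  - destruct (cf_rest_S alpha n Hr) as [Hrest [Ha Hr']].
    assert (Hq' : (1 <= cf_q alpha (S n))%nat).
    { assert (Ha' : (1 <= cf_a alpha (S n))%nat) by (apply INR_le; exact Ha).
      rewrite cf_q_S. nia. }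
    assert (Hx' : alpha = (P (S n) + INR (cf_p_prev alpha (S n)) * r (S n))
                          / (Q (S n) + INR (cf_q_prev alpha (S n)) * r (S n))).
    { rewrite cf_p_S, cf_q_S, cf_p_prev_S, cf_q_prev_S, !plus_INR, !mult_INR.
      apply mobius_step; [apply (le_INR 1) in Hq; simpl in Hq; lra | apply pos_INR | lra | lra |].
      replace (/ (INR (cf_a alpha (S n)) + r (S n))) with (r n) by (rewrite Hrest; field; lra).
      exact Hx. }
    repeat split; [| lra | exact Hq' | exact Hx'].
    (* [r (S n) = 0] would make [alpha = p_(n+1) / q_(n+1)] rational *)
    destruct (Rle_lt_dec (r (S n)) 0) as [Hr0|]; [exfalso|assumption].
    apply (alpha_irrational (cf_p alpha (S n)) (cf_q alpha (S n)) Hq').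
    rewrite Hx' at 1. replace (r (S n)) with 0 by lra. rewrite !Rmult_0_r, !Rplus_0_r. reflexivity.
Qed.

Lemma cf_a_ge1 n : (1 <= cf_a alpha (S n))%nat.
Proof.
  destruct (cf_rest_S alpha n (proj1 (cf_expansion n))) as [_ [Ha _]].
  apply INR_le. simpl. exact Ha.
Qed.

Lemma cf_q_ge1 n : (1 <= cf_q alpha n)%nat.
Proof. apply cf_expansion. Qed.

Lemma Q_ge1 n : 1 <= Q n.
Proof. apply (le_INR 1), cf_q_ge1. Qed.

Lemma cf_q_add_prev_le n : (cf_q alpha n + cf_q_prev alpha n <= cf_q alpha (S n))%nat.
Proof. rewrite cf_q_S. pose proof (cf_a_ge1 n). nia. Qed.

Lemma cf_q_mono n m : (n <= m)%nat -> (cf_q alpha n <= cf_q alpha m)%nat.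
Proof. induction 1; [lia|]. pose proof (cf_q_add_prev_le m). lia. Qed.

Lemma cf_q_ge_index n : (n <= cf_q alpha n)%nat.
Proof.
  induction n as [|n IH]; [lia|].
  pose proof (cf_q_add_prev_le n). destruct n as [|n]; [apply cf_q_ge1|].
  rewrite cf_q_prev_S in *. pose proof (cf_q_ge1 n). lia.
Qed.

Lemma alpha_sub_convergent n : alpha - P n / Q n =
  (-1) ^ n * r n / (Q n * (Q n + INR (cf_q_prev alpha n) * r n)).
Proof.
  destruct (cf_expansion n) as [Hr [_ Hx]].
  pose proof (Q_ge1 n). pose proof (pos_INR (cf_q_prev alpha n)).
  rewrite Hx at 1. rewrite <- (cf_det alpha n). field. split; nra.
Qed.

Lemma convergent_succ_sub n : P (S n) / Q (S n) - P n / Q n = (-1) ^ n / (Q n * Q (S n)).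
Proof.
  pose proof (cf_det alpha (S n)) as Hdet. rewrite cf_p_prev_S, cf_q_prev_S in Hdet.
  pose proof (Q_ge1 n). pose proof (Q_ge1 (S n)).
  replace ((-1) ^ n) with (- (-1) ^ S n) by (simpl; ring).
  rewrite <- Hdet. field. lra.
Qed.

Lemma even_convergent_below k : 0 < alpha - P (2 * k) / Q (2 * k) < 1 / Q (2 * k) ^ 2.
Proof.
  rewrite alpha_sub_convergent, pow_1_even, Rmult_1_l.
  destruct (cf_expansion (2 * k)) as [Hr _]. pose proof (Q_ge1 (2 * k)).
  assert (0 <= INR (cf_q_prev alpha (2 * k)) * r (2 * k)) by (apply Rmult_le_pos; [apply pos_INR | lra]).
  set (d := Q (2 * k) * (Q (2 * k) + INR (cf_q_prev alpha (2 * k)) * r (2 * k))).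
  assert (Hd : Q (2 * k) ^ 2 <= d) by (unfold d; nra).
  split.
  - apply Rdiv_lt_0_compat; nra.
  - apply Rlt_le_trans with (1 / d).
    + apply Rmult_lt_compat_r; [apply Rinv_0_lt_compat; nra | lra].
    + apply Rdiv_le_cross; nra.
Qed.

Lemma even_convergent_le_succ k : P (2 * k) / Q (2 * k) <= P (2 * S k) / Q (2 * S k).
Proof.
  replace (2 * S k)%nat with (S (S (2 * k))) by lia.
  pose proof (convergent_succ_sub (2 * k)) as H0. rewrite pow_1_even in H0.
  pose proof (convergent_succ_sub (S (2 * k))) as H1. rewrite pow_1_odd in H1.
  assert (Q (2 * k) <= Q (S (S (2 * k)))) by (apply le_INR, cf_q_mono; lia).
  pose proof (Q_ge1 (2 * k)). pose proof (Q_ge1 (S (2 * k))).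
  assert (1 / (Q (S (2 * k)) * Q (S (S (2 * k)))) <= 1 / (Q (2 * k) * Q (S (2 * k))))
    by (apply Rdiv_le_cross; nra).
  unfold Rdiv in *. lra.
Qed.

Lemma even_convergents_mono k l : (k <= l)%nat -> P (2 * k) / Q (2 * k) <= P (2 * l) / Q (2 * l).
Proof. induction 1; [lra|]. pose proof (even_convergent_le_succ m). lra. Qed.

Lemma convergent_gap_above n (p : Z) (q : nat) : (1 <= q)%nat ->
  IZR p / INR q < P n / Q n -> 1 / (INR q * Q n) <= P n / Q n - IZR p / INR q.
Proof.
  intros Hq Hlt. rewrite INR_IZR_INZ with (n := cf_p alpha n) in *.
  apply frac_lt_gap; [exact Hq | apply cf_q_ge1 | exact Hlt].
Qed.

Lemma convergent_gap_below n (p : Z) (q : nat) : (1 <= q)%nat ->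
  P n / Q n < IZR p / INR q -> 1 / (INR q * Q n) <= IZR p / INR q - P n / Q n.
Proof.
  intros Hq Hlt. rewrite INR_IZR_INZ with (n := cf_p alpha n) in *. rewrite Rmult_comm.
  apply frac_lt_gap; [apply cf_q_ge1 | exact Hq | exact Hlt].
Qed.

Lemma even_convergent_denominator_le k (p : Z) (q : nat) : (1 <= q)%nat ->
  IZR p / INR q = P (2 * k) / Q (2 * k) -> Q (2 * k) <= INR q.
Proof.
  intros Hq Hx.
  pose proof (convergent_succ_sub (2 * k)) as Hsub. rewrite pow_1_even in Hsub.
  pose proof (Q_ge1 (2 * k)). pose proof (Q_ge1 (S (2 * k))).
  assert (0 < 1 / (Q (2 * k) * Q (S (2 * k)))) by (apply Rdiv_lt_0_compat; nra).
  pose proof (convergent_gap_above (S (2 * k)) p q Hq ltac:(lra)) as Hgap.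
  rewrite Hx, Hsub in Hgap.
  apply (le_INR 1) in Hq. simpl in Hq.
  apply le_of_inv_mul_le with (Q (S (2 * k))); lra.
Qed.

Lemma between_even_convergents k (p : Z) (q : nat) : (1 <= q)%nat ->
  P (2 * k) / Q (2 * k) < IZR p / INR q < P (2 * S k) / Q (2 * S k) ->
  Q (2 * k) + Q (S (2 * k)) <= INR q /\
  1 / (2 * INR q ^ 2) < P (2 * S k) / Q (2 * S k) - IZR p / INR q /\
  1 / (INR q * Q (2 * S k)) <= P (2 * S k) / Q (2 * S k) - IZR p / INR q.
Proof.
  intros Hq [Hlo Hhi]. replace (2 * S k)%nat with (S (S (2 * k))) in * by lia.
  pose proof (convergent_succ_sub (2 * k)) as H0. rewrite pow_1_even in H0.
  pose proof (convergent_succ_sub (S (2 * k))) as H1. rewrite pow_1_odd in H1.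
  pose proof (Q_ge1 (2 * k)). pose proof (Q_ge1 (S (2 * k))). pose proof (Q_ge1 (S (S (2 * k)))).
  assert (0 < 1 / (Q (S (2 * k)) * Q (S (S (2 * k))))) by (apply Rdiv_lt_0_compat; nra).
  pose proof (convergent_gap_below (2 * k) p q Hq Hlo) as G0.
  pose proof (convergent_gap_above (S (2 * k)) p q Hq ltac:(unfold Rdiv in *; lra)) as G1.
  pose proof (convergent_gap_above (S (S (2 * k))) p q Hq Hhi) as G2.
  apply (le_INR 1) in Hq. simpl in Hq.
  assert (Hden : Q (2 * k) + Q (S (2 * k)) <= INR q) by (apply sum_le_of_inv_gaps; lra).
  repeat split; [exact Hden | | exact G2].
  apply gap_below_convergent
    with (Q (S (2 * k))) (Q (S (S (2 * k)))) (P (S (2 * k)) / Q (S (2 * k))); lra.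
Qed.

Lemma even_convergents_approach x : x < alpha -> exists k, x < P (2 * k) / Q (2 * k).
Proof.
  intros Hx. destruct (INR_unbounded (1 / (alpha - x))) as [k Hk].
  assert (0 < 1 / (alpha - x)) by (apply Rdiv_lt_0_compat; lra).
  exists k. pose proof (even_convergent_below k) as [_ Hbelow].
  assert (Hkq : INR k <= Q (2 * k)) by (apply le_INR; pose proof (cf_q_ge_index (2 * k)); lia).
  pose proof (Q_ge1 (2 * k)).
  assert (1 / Q (2 * k) ^ 2 <= 1 / INR k) by (apply Rdiv_le_cross; nra).
  assert (1 / INR k < alpha - x).
  { apply Rmult_lt_reg_r with (INR k / (alpha - x)); [apply Rdiv_lt_0_compat; lra|].
    replace (1 / INR k * (INR k / (alpha - x))) with (1 / (alpha - x)) by (field; lra).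
    replace ((alpha - x) * (INR k / (alpha - x))) with (INR k) by (field; lra).
    lra. }
  lra.
Qed.

Lemma even_convergent_bracket x : 0 < x < alpha ->
  exists k, P (2 * k) / Q (2 * k) <= x < P (2 * S k) / Q (2 * S k).
Proof.
  intros Hx. destruct (even_convergents_approach x (proj2 Hx)) as [k Hk].
  induction k as [|k IH].
  - exfalso. unfold cf_p, cf_q in Hk. simpl in Hk. lra.
  - destruct (Rlt_le_dec x (P (2 * k) / Q (2 * k))) as [Hlt|Hle]; [exact (IH Hlt)|].
    exists k. split; assumption.
Qed.

(** * A window of points of [D] below a separated convergent *)

Section Window.
Variables tau gamma : R.
Hypothesis tau_ge : 7 / 2 <= tau.
Hypothesis gamma_pos : 0 < gamma.
Hypothesis alpha_D : D gamma tau alpha.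
Variable j : nat.
Hypothesis qm_ge10 : 10 <= Q (2 * j).
Hypothesis separated : forall n, Nat.Even n -> (n < 2 * j)%nat ->
  P n / Q n + approx_radius tau gamma (cf_q alpha n)
  < P (2 * j) / Q (2 * j) - approx_radius tau gamma (cf_q alpha (2 * j))
    - 2 * gamma / Rpower (Q (2 * j)) (tau - 1).

Local Notation rho := (approx_radius tau gamma).

Let tau_ge3 : 3 <= tau.
Proof. lra. Qed.

Let gamma_le_half : gamma <= 1 / 2.
Proof. exact (D_gamma_le_half tau gamma alpha alpha_D). Qed.

Definition qm : R := Q (2 * j).
Definition qm_pow : R := Rpower qm (tau - 1).
Definition win_len : R := 2 * gamma / qm_pow.
Definition win_hi : R := P (2 * j) / qm - rho (cf_q alpha (2 * j)).
Definition win_lo : R := win_hi - win_len.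
Definition q_small : R := qm_pow / (2 * qm).

Lemma qm_pow_ge_sq : qm ^ 2 <= qm_pow.
Proof. apply pow_le_Rpower; [unfold qm; lra | simpl; lra]. Qed.

Lemma qm_pow_sq_ge : qm ^ 5 <= qm_pow ^ 2.
Proof.
  unfold qm_pow. replace (Rpower qm (tau - 1) ^ 2) with (Rpower qm ((tau - 1) + (tau - 1)))
    by (rewrite Rpower_plus; ring).
  apply pow_le_Rpower; [unfold qm; lra | simpl; lra].
Qed.

Lemma approx_radius_qm : rho (cf_q alpha (2 * j)) = gamma / (qm ^ 2 * qm_pow).
Proof. unfold approx_radius, qm_pow, qm. rewrite Rpower_plus_2 by lra. reflexivity. Qed.

Lemma win_len_pos : 0 < win_len.
Proof. unfold win_len. pose proof qm_pow_ge_sq. unfold qm in *. apply Rdiv_lt_0_compat; nra. Qed.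

Lemma q_small_pos : 0 < q_small.
Proof. unfold q_small. pose proof qm_pow_ge_sq. unfold qm in *. apply Rdiv_lt_0_compat; nra. Qed.

Lemma win_hi_lt_alpha : win_hi < alpha.
Proof.
  unfold win_hi, qm. pose proof (even_convergent_below j).
  pose proof (approx_radius_pos tau gamma gamma_pos (cf_q alpha (2 * j))). lra.
Qed.

Lemma gamma_lt_win_lo : gamma < win_lo.
Proof.
  assert (Hj : (0 < 2 * j)%nat).
  { destruct (Nat.eq_dec j 0) as [Hj0|]; [|lia].
    exfalso. rewrite Hj0 in qm_ge10. unfold cf_q in qm_ge10. simpl in qm_ge10. lra. }
  pose proof (separated 0 ltac:(exists 0%nat; reflexivity) Hj) as H0.
  change (cf_q alpha 0) with 1%nat in H0. change (cf_p alpha 0) with 0%nat in H0.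
  rewrite approx_radius_1 in H0. replace (INR 0 / INR 1) with 0 in H0 by (simpl; field).
  unfold win_lo, win_hi, win_len, qm_pow, qm. lra.
Qed.

Definition misses_window (x r : R) : Prop := x + r <= win_lo \/ win_hi <= x - r.

Lemma misses_before_window n x r : Nat.Even n -> (n < 2 * j)%nat ->
  x + r <= P n / Q n + rho (cf_q alpha n) -> misses_window x r.
Proof.
  intros Hn Hnj Hx. left. pose proof (separated n Hn Hnj).
  unfold win_lo, win_hi, win_len, qm_pow, qm. lra.
Qed.

Lemma misses_beyond_window (p : Z) (q : nat) : (cf_q alpha (2 * j) <= q)%nat ->
  P (2 * j) / Q (2 * j) <= IZR p / INR q -> misses_window (IZR p / INR q) (rho q).
Proof.
  intros Hq Hx. right.
  assert (rho q <= rho (cf_q alpha (2 * j)))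
    by (apply (approx_radius_antitone tau gamma tau_ge3 gamma_pos); split; [apply cf_q_ge1 | exact Hq]).
  unfold win_hi, qm. lra.
Qed.

Lemma misses_above_alpha (p : Z) (q : nat) : (1 <= q)%nat ->
  alpha <= IZR p / INR q -> misses_window (IZR p / INR q) (rho q).
Proof.
  intros Hq Hx. right. pose proof win_hi_lt_alpha.
  pose proof (D_approx_radius_le tau gamma alpha alpha_D p q Hq) as Hfar.
  rewrite Rabs_left1 in Hfar; lra.
Qed.

Lemma misses_nonpos (p : Z) (q : nat) : (1 <= q)%nat ->
  IZR p / INR q <= 0 -> misses_window (IZR p / INR q) (rho q).
Proof.
  intros Hq Hx. left. pose proof gamma_lt_win_lo.
  pose proof (approx_radius_antitone tau gamma tau_ge3 gamma_pos 1 q ltac:(lia)).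
  rewrite approx_radius_1 in *. lra.
Qed.

Lemma misses_at_even_convergent k (p : Z) (q : nat) : (1 <= q)%nat ->
  IZR p / INR q = P (2 * k) / Q (2 * k) -> misses_window (IZR p / INR q) (rho q).
Proof.
  intros Hq Hx.
  assert (Hden : (cf_q alpha (2 * k) <= q)%nat)
    by (apply INR_le, (even_convergent_denominator_le k p q Hq Hx)).
  destruct (lt_dec k j) as [Hkj|Hjk].
  - apply (misses_before_window (2 * k)); [exists k; reflexivity | lia |].
    assert (rho q <= rho (cf_q alpha (2 * k)))
      by (apply (approx_radius_antitone tau gamma tau_ge3 gamma_pos); split; [apply cf_q_ge1 | exact Hden]).
    lra.
  - apply misses_beyond_window.
    + pose proof (cf_q_mono (2 * j) (2 * k) ltac:(lia)). lia.
    + rewrite Hx. apply even_convergents_mono. lia.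
Qed.

Lemma misses_last_gap (p : Z) (q : nat) : (1 <= q)%nat -> 2 <= INR q -> INR q <= q_small ->
  1 / (2 * INR q ^ 2) < P (2 * j) / qm - IZR p / INR q ->
  1 / (INR q * qm) <= P (2 * j) / qm - IZR p / INR q ->
  IZR p / INR q + rho q <= win_lo.
Proof.
  intros Hq Hq2 Hsmall Hgap2 Hgap1.
  assert (HqA : 2 * INR q * qm <= qm_pow).
  { unfold q_small in Hsmall. apply Rmult_le_reg_r with (/ (2 * qm)); [apply Rinv_0_lt_compat; unfold qm; lra|].
    replace (2 * INR q * qm * / (2 * qm)) with (INR q) by (unfold qm; field; lra). exact Hsmall. }
  assert (rho q + rho (cf_q alpha (2 * j)) + 2 * gamma / qm_pow <= P (2 * j) / qm - IZR p / INR q).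
  { apply (window_gap_absorbs (INR q) qm qm_pow gamma); try lra.
    - unfold qm; lra.
    - exact qm_pow_ge_sq.
    - exact (approx_radius_le_pow4 tau gamma tau_ge3 gamma_pos q Hq).
    - exact approx_radius_qm. }
  unfold win_lo, win_hi, win_len. lra.
Qed.

Lemma misses_between_even_convergents k (p : Z) (q : nat) : (1 <= q)%nat -> INR q <= q_small ->
  P (2 * k) / Q (2 * k) < IZR p / INR q < P (2 * S k) / Q (2 * S k) ->
  misses_window (IZR p / INR q) (rho q).
Proof.
  intros Hq Hsmall Hx.
  destruct (between_even_convergents k p q Hq Hx) as [Hden [Hgap2 Hgap1]].
  pose proof (Q_ge1 (2 * k)). pose proof (Q_ge1 (S (2 * k))).
  destruct (lt_eq_lt_dec (S k) j) as [[Hkj|Hkj]|Hjk].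
  - apply (misses_before_window (2 * S k)); [exists (S k); reflexivity | lia |].
    pose proof (approx_radius_le_half_inv_sq tau gamma tau_ge3 gamma_pos gamma_le_half q Hq).
    pose proof (approx_radius_pos tau gamma gamma_pos (cf_q alpha (2 * S k))).
    lra.
  - left. rewrite Hkj in Hgap1, Hgap2. apply misses_last_gap; [exact Hq | lra | exact Hsmall | exact Hgap2 | exact Hgap1].
  - apply misses_beyond_window.
    + assert (Hq1 : (cf_q alpha (S (2 * k)) <= q)%nat) by (apply INR_le; lra).
      pose proof (cf_q_mono (2 * j) (S (2 * k)) ltac:(lia)). lia.
    + pose proof (even_convergents_mono j k ltac:(lia)). lra.
Qed.

Lemma small_denominators_miss (p : Z) (q : nat) : (1 <= q)%nat -> INR q <= q_small ->
  misses_window (IZR p / INR q) (rho q).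
Proof.
  intros Hq Hsmall.
  destruct (Rle_lt_dec alpha (IZR p / INR q)) as [Habove|Hbelow];
    [exact (misses_above_alpha p q Hq Habove)|].
  destruct (Rle_lt_dec (IZR p / INR q) 0) as [Hnonpos|Hpos];
    [exact (misses_nonpos p q Hq Hnonpos)|].
  destruct (even_convergent_bracket (IZR p / INR q) (conj Hpos Hbelow)) as [k [Hlo Hhi]].
  destruct Hlo as [Hlo|Heq].
  - exact (misses_between_even_convergents k p q Hq Hsmall (conj Hlo Hhi)).
  - exact (misses_at_even_convergent k p q Hq (eq_sym Heq)).
Qed.

Definition near_fraction (q : nat) (x : R) : Prop :=
  (1 <= q)%nat /\ exists p : Z, Rabs (x - IZR p / INR q) < rho q.

Definition numerator_lo (q : nat) : Z := Int_part (INR q * win_lo).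

(* The candidate numerators are [numerator_lo q, ..., Int_part (q * win_hi) + 1] *)
Definition numerator_count (q : nat) : nat :=
  Z.to_nat (Int_part (INR q * win_hi) - numerator_lo q + 2).

Definition window_balls (q : nat) : list (R * R) :=
  if Rle_dec (INR q) q_small then nil
  else map (fun k => ball (IZR (numerator_lo q + Z.of_nat k) / INR q) (rho q))
           (seq 0 (numerator_count q)).

Definition window_balls_upto (K : nat) : list (R * R) := flat_map window_balls (seq 1 K).

Lemma numerator_range (p : Z) (q : nat) x : (1 <= q)%nat -> win_lo <= x <= win_hi ->
  Rabs (x - IZR p / INR q) < rho q ->
  (numerator_lo q <= p <= Int_part (INR q * win_hi) + 1)%Z.
Proof.
  intros Hq Hx Hnear.
  pose proof (mul_approx_radius_le_half tau gamma tau_ge3 gamma_le_half q Hq) as Hhalf.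
  assert (Hdist : Rabs (INR q * x - IZR p) < 1 / 2).
  { rewrite dist_mul_denominator by exact Hq. apply (le_INR 1) in Hq. simpl in Hq.
    eapply Rlt_le_trans; [apply Rmult_lt_compat_l; [lra | exact Hnear] | exact Hhalf]. }
  apply Rabs_def2 in Hdist. apply (le_INR 1) in Hq. simpl in Hq.
  assert (INR q * win_lo <= INR q * x <= INR q * win_hi) by (split; apply Rmult_le_compat_l; lra).
  unfold numerator_lo.
  destruct (base_Int_part (INR q * win_lo)). destruct (base_Int_part (INR q * win_hi)).
  split.
  - assert (Hlt : IZR (Int_part (INR q * win_lo)) < IZR (p + 1)) by (rewrite plus_IZR; lra).
    apply lt_IZR in Hlt. lia.
  - assert (Hlt : IZR p < IZR (Int_part (INR q * win_hi) + 2)) by (rewrite plus_IZR; lra).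
    apply lt_IZR in Hlt. lia.
Qed.

Lemma numerator_count_le q : INR (numerator_count q) <= INR q * win_len + 3.
Proof.
  pose proof win_len_pos. pose proof (pos_INR q).
  unfold numerator_count, numerator_lo.
  destruct (base_Int_part (INR q * win_lo)). destruct (base_Int_part (INR q * win_hi)).
  assert (INR q * win_lo <= INR q * win_hi) by (apply Rmult_le_compat_l; unfold win_lo; lra).
  assert (Hnn : (0 <= Int_part (INR q * win_hi) - Int_part (INR q * win_lo) + 2)%Z).
  { assert (Hlt : IZR (Int_part (INR q * win_lo)) < IZR (Int_part (INR q * win_hi) + 1))
      by (rewrite plus_IZR; lra).
    apply lt_IZR in Hlt. lia. }
  rewrite INR_IZR_INZ, Z2Nat.id, plus_IZR, minus_IZR by exact Hnn.
  replace (INR q * win_len) with (INR q * win_hi - INR q * win_lo) by (unfold win_lo; ring).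
  lra.
Qed.

Lemma window_balls_upto_length_lt K : total_length (window_balls_upto K) < win_len.
Proof.
  pose proof q_small_pos. pose proof win_len_pos.
  set (B := 2 * gamma * (win_len / q_small + 3 / q_small ^ 2)).
  assert (HB : 0 <= B).
  { unfold B. apply Rmult_le_pos; [lra|].
    assert (0 < 3 / q_small ^ 2) by (apply Rdiv_lt_0_compat; [lra | apply pow_lt; lra]).
    assert (0 < win_len / q_small) by (apply Rdiv_lt_0_compat; lra). lra. }
  unfold window_balls_upto. rewrite total_length_flat_map.
  eapply Rle_lt_trans.
  - apply (sum_inv_sq_tail q_small B (fun q => total_length (window_balls q))); [lra | exact HB | |].
    + intros q _ Hq. unfold window_balls. destruct (Rle_dec (INR q) q_small); [simpl; lra | contradiction].
    + intros q Hq. unfold window_balls. destruct (Rle_dec (INR q) q_small) as [|_]; [lra|].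
      assert (Hq1 : (1 <= q)%nat) by (destruct q; [simpl in Hq; lra | lia]).
      rewrite total_length_map_ball, length_seq.
      apply balls_length_bound; [lra | lra | lra | | split; [apply pos_INR | apply numerator_count_le]].
      split; [apply Rlt_le, approx_radius_pos, gamma_pos|].
      exact (approx_radius_le_pow4 tau gamma tau_ge3 gamma_pos q Hq1).
  - unfold B, win_len, q_small. apply tail_bound_lt_window;
      [unfold qm; lra | exact qm_pow_ge_sq | exact qm_pow_sq_ge | lra].
Qed.

Lemma window_balls_cover K q x : (q <= K)%nat -> win_lo <= x <= win_hi -> near_fraction q x ->
  exists I, In I (window_balls_upto K) /\ fst I < x < snd I.
Proof.
  intros HqK Hx [Hq [p Hnear]].
  pose proof (Rabs_def2 _ _ Hnear) as [Hhi Hlo].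
  destruct (Rle_dec (INR q) q_small) as [Hsmall|Hlarge].
  - exfalso. destruct (small_denominators_miss p q Hq Hsmall); lra.
  - destruct (numerator_range p q x Hq Hx Hnear) as [Hp1 Hp2].
    exists (ball (IZR p / INR q) (rho q)). split.
    + unfold window_balls_upto. apply in_flat_map. exists q. split; [apply in_seq; lia|].
      unfold window_balls. destruct (Rle_dec (INR q) q_small) as [|_]; [contradiction|].
      apply in_map_iff. exists (Z.to_nat (p - numerator_lo q)). split.
      * rewrite Z2Nat.id by lia. replace (numerator_lo q + (p - numerator_lo q))%Z with p by lia.
        reflexivity.
      * apply in_seq. unfold numerator_count. lia.
    + unfold ball. simpl. lra.
Qed.

Lemma window_finitely_avoids K : exists x, win_lo <= x <= win_hi /\
  forall q, (q <= K)%nat -> ~ near_fraction q x.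
Proof.
  apply NNPP. intros Hnone.
  assert (Hcov : forall x, win_lo <= x <= win_hi ->
                 exists I, In I (window_balls_upto K) /\ fst I < x < snd I).
  { intros x Hx. apply NNPP. intros Hunc. apply Hnone. exists x. split; [exact Hx|].
    intros q HqK Hnear. exact (Hunc (window_balls_cover K q x HqK Hx Hnear)). }
  assert (Hord : forall I, In I (window_balls_upto K) -> fst I <= snd I).
  { intros I HI. unfold window_balls_upto in HI. apply in_flat_map in HI as [q [_ HI]].
    unfold window_balls in HI. destruct (Rle_dec (INR q) q_small); [destruct HI|].
    apply in_map_iff in HI as [k [<- _]]. unfold ball. simpl.
    pose proof (approx_radius_pos tau gamma gamma_pos q). lra. }
  pose proof win_len_pos. pose proof (window_balls_upto_length_lt K).
  pose proof (interval_cover_length _ win_lo win_hi ltac:(unfold win_lo; lra) Hord Hcov).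
  unfold win_lo in *. lra.
Qed.

Lemma window_point : exists y, D gamma tau y /\ y < alpha /\ alpha - y < 3 / Q (2 * j).
Proof.
  destruct (closed_interval_avoids_open_family win_lo win_hi near_fraction) as [y [Hy Hfar]].
  - intros q x [Hq [p Hnear]].
    exists (rho q - Rabs (x - IZR p / INR q)). split; [lra|].
    intros z Hz. split; [exact Hq|]. exists p.
    pose proof (Rabs_triang (z - x) (x - IZR p / INR q)).
    replace (z - IZR p / INR q) with ((z - x) + (x - IZR p / INR q)) by ring. lra.
  - exact window_finitely_avoids.
  - pose proof win_hi_lt_alpha. pose proof gamma_lt_win_lo.
    exists y. split; [|split; [lra|]].
    + apply D_of_approx_radius_le; [lra|]. intros p q Hq.
      apply Rnot_lt_le. intros Hnear. exact (Hfar q (conj Hq (ex_intro _ p Hnear))).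
    + pose proof (even_convergent_below j) as [_ Hconv]. fold qm in Hconv |- *.
      pose proof qm_pow_ge_sq. assert (Hqm : 10 <= qm) by exact qm_ge10.
      assert (rho (cf_q alpha (2 * j)) <= 1 / qm ^ 2).
      { rewrite approx_radius_qm. apply Rdiv_le_cross; [apply Rmult_lt_0_compat; nra | nra |].
        assert (gamma * qm ^ 2 <= qm_pow * qm ^ 2) by (apply Rmult_le_compat_r; nra). lra. }
      assert (win_len <= 1 / qm ^ 2) by (unfold win_len; apply Rdiv_le_cross; nra).
      assert (3 / qm ^ 2 <= 3 / qm) by (apply Rdiv_le_cross; nra).
      unfold win_lo, win_hi in Hy. unfold Rdiv in *. lra.
Qed.
End Window.
End Convergents.

Theorem lemma9 (tau gamma alpha : R) :
  (3 + sqrt 17) / 2 < tau ->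
  0 < gamma ->
  D gamma tau alpha ->
  (forall n : nat, Nat.Even n ->
     alpha - INR (cf_p alpha n) / INR (cf_q alpha n)
       > gamma / Rpower (INR (cf_q alpha n)) (tau + 1)) ->
  (forall N : nat, exists m : nat, (N <= m)%nat /\ Nat.Even m /\
     forall n : nat, Nat.Even n -> (n < m)%nat ->
       INR (cf_p alpha n) / INR (cf_q alpha n)
         + gamma / Rpower (INR (cf_q alpha n)) (tau + 1)
       < INR (cf_p alpha m) / INR (cf_q alpha m)
         - gamma / Rpower (INR (cf_q alpha m)) (tau + 1)
         - 2 * gamma / Rpower (INR (cf_q alpha m)) (tau - 1)) ->
  accumulation_point (D gamma tau) alpha.
Proof.
  intros Htau Hgamma HD _ Hsep eps Heps.
  pose proof sqrt_17_gt_4.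
  pose proof (D_irrational tau gamma alpha Hgamma HD) as Hirr.
  destruct (INR_unbounded (3 / eps)) as [N HN].
  destruct (Hsep (N + 10)%nat) as [m [HNm [[j ->] Hsep_m]]].
  assert (Hqm : INR (N + 10) <= INR (cf_q alpha (2 * j)))
    by (apply le_INR; pose proof (cf_q_ge_index alpha (proj1 HD) Hirr (2 * j)); lia).
  rewrite plus_INR in Hqm. replace (INR 10) with 10 in Hqm by (simpl; ring).
  pose proof (pos_INR N).
  destruct (window_point alpha (proj1 HD) Hirr tau gamma ltac:(lra) Hgamma HD j ltac:(lra) Hsep_m)
    as [y [HyD [Hya Hclose]]].
  exists y. split; [exact HyD|]. split; [lra|].
  rewrite Rabs_left1 by lra.
  pose proof (Rdiv_lt_swap 3 (INR (cf_q alpha (2 * j))) eps Heps ltac:(lra) ltac:(lra)).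
  lra.
Qed.
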